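(* Let $\gamma\in(1,3)$, $\mu\in(0,1)$, $K>0$, $U_D=\frac{2}{3-\gamma}$ and \[ y_D=-K\frac{\big(U_D-\frac{2\mu}{\gamma+1}\big)^{\frac1\mu-1}}{U_D^{\frac1\mu}}<0. \] Define $U^{\mathrm{sp}}=U^{\mathrm{sp}}(y)$ for $y_D<y<0$ by \[ y=-K\frac{\big(U^{\mathrm{sp}}-\frac{2\mu}{\gamma+1}\big)^{\frac1\mu-1}}{(U^{\mathrm{sp}})^{\frac1\mu}},\qquad y_D<y<0,\ U^{\mathrm{sp}}>U_D. \] Then $U^{\mathrm{sp}}$ solves \[ y\frac{dU}{dy}=-\frac{[(\gamma+1)U-2\mu]U}{(\gamma+1)U-2}, \] satisfies $\lim_{y\to0^-}yU^{\mathrm{sp}}(y)=-K$, and $\frac{2}{3-\gamma}=U_D<U^{\mathrm{sp}}<\infty$. *)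

From Stdlib Require Import Reals.
From Coquelicot Require Import Coquelicot.
Open Scope R_scope.

Definition U_D (gamma : R) : R := 2 / (3 - gamma).

Definition Fsp (gamma mu K U : R) : R :=
  - K * Rpower (U - 2 * mu / (gamma + 1)) (1 / mu - 1) / Rpower U (1 / mu).

Definition y_D (gamma mu K : R) : R := Fsp gamma mu K (U_D gamma).

Definition ode_rhs (gamma mu U : R) : R :=
  - (((gamma + 1) * U - 2 * mu) * U) / ((gamma + 1) * U - 2).

From Stdlib Require Import Reals Lra Ranalysis5.
From Coquelicot Require Import Coquelicot.
Open Scope R_scope.

(* For U > 2/(gamma+1) the function F := Fsp gamma mu K is negative with
   logarithmic derivative (2/(gamma+1) - U) / (U (U - 2 mu/(gamma+1))) < 0, so it
   increases strictly; moreover U F(U) = -K (1 - 2 mu/((gamma+1) U))^(1/mu - 1)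
   tends to -K, so F increases from y_D = F(U_D) to 0.  Hence U^sp = F^-1 exists
   and tends to +oo as y -> 0-, which gives y U^sp(y) = U F(U) -> -K, and the
   inverse function rule gives y dU/dy = F(U) / F'(U), which is the right-hand
   side of the ODE. *)

Section RightInverse.

Variables (f g : R -> R) (a : R).
Hypothesis f_incr : forall u v, a < u -> u < v -> f u < f v.

Lemma right_inverse_increasing (I : R -> Prop) :
  (forall y, I y -> a < g y /\ y = f (g y)) ->
  forall y z, I y -> I z -> y < z -> g y < g z.
Proof.
  intros hg y z hy hz hyz.
  destruct (hg y hy) as [gy ey], (hg z hz) as [gz ez].
  destruct (Rlt_le_dec (g y) (g z)) as [|hle]; [assumption|].
  destruct (Rle_lt_or_eq_dec _ _ hle) as [hlt|heq].
  - pose proof (f_incr _ _ gz hlt). lra.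
  - rewrite heq in ez. lra.
Qed.

Lemma is_derive_right_inverse (f' : R -> R) (lo hi y : R) :
  (forall u, a < u -> is_derive f u (f' u)) ->
  (forall z, lo < z < hi -> a < g z /\ z = f (g z)) ->
  lo < y < hi -> f' (g y) <> 0 ->
  is_derive g y (/ f' (g y)).
Proof.
  intros hf hg hy hf'.
  set (l := (lo + y) / 2). set (u := (y + hi) / 2).
  assert (hl : lo < l < y) by (unfold l; lra).
  assert (hu : y < u < hi) by (unfold u; lra).
  assert (g_incr := right_inverse_increasing _ hg).
  assert (hgl := proj1 (hg l ltac:(lra))).
  assert (g_mono : forall z, l <= z <= u -> g l <= g z <= g u).
  { intros z [hz1 hz2]. split.
    - destruct (Rle_lt_or_eq_dec _ _ hz1) as [h|e]; [|rewrite e; lra].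
      apply Rlt_le, g_incr; cbv beta; lra.
    - destruct (Rle_lt_or_eq_dec _ _ hz2) as [h|e]; [|rewrite e; lra].
      apply Rlt_le, g_incr; cbv beta; lra. }
  assert (hgy : g l <= g y <= g u) by (apply g_mono; lra).
  assert (f_der : forall v, g l <= v <= g u -> derivable_pt f v).
  { intros v hv. exists (f' v). apply is_derive_Reals, hf. lra. }
  assert (f_cont : forall v, g l <= v <= g u -> continuity_pt f v).
  { intros v hv. apply derivable_continuous_pt, f_der, hv. }
  assert (fg_id : forall z, l <= z <= u -> comp f g z = id z).
  { intros z hz. unfold comp, id. symmetry. apply (hg z). lra. }
  assert (g_cont : continuity_pt g y).
  { destruct (hg l ltac:(lra)) as [_ el], (hg u ltac:(lra)) as [_ eu].
    apply (continuity_pt_recip_interv f g (g l) (g u)).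
    - apply g_incr; cbv beta; lra.
    - intros v w hv hvw _. apply f_incr; lra.
    - rewrite <- el, <- eu. intros z hz1 hz2. apply fg_id. lra.
    - rewrite <- el, <- eu. intros z hz1 hz2. apply g_mono. lra.
    - exact f_cont.
    - rewrite <- el, <- eu. lra. }
  assert (hd : derive_pt f (g y) (f_der (g y) hgy) = f' (g y)).
  { apply derive_pt_eq_0, is_derive_Reals, hf. lra. }
  pose proof (derivable_pt_lim_recip_interv f g l u y f_der g_cont
                ltac:(lra) ltac:(lra) hgy fg_id ltac:(rewrite hd; exact hf')) as hlim.
  rewrite hd, Rdiv_1_l in hlim.
  apply is_derive_Reals, hlim.
Qed.

Hypothesis f_neg : forall u, a < u -> f u < 0.

Lemma right_inverse_at_left0 (lo : R) :
  lo < 0 ->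
  (forall y, lo < y < 0 -> a < g y /\ y = f (g y)) ->
  filterlim g (at_left 0) (Rbar_locally p_infty).
Proof.
  intros hlo hg P [M HM].
  set (M' := Rmax M (a + 1)).
  assert (hM := Rmax_l M (a + 1)). assert (ha := Rmax_r M (a + 1)). fold M' in hM, ha.
  assert (hfM := f_neg M' ltac:(lra)).
  assert (hdelta : 0 < Rmin (- lo) (- f M')) by (apply Rmin_pos; lra).
  exists (mkposreal _ hdelta). intros y hy hy0. apply HM.
  apply Rabs_def2 in hy. unfold minus, plus, opp in hy; simpl in hy.
  assert (h1 := Rmin_l (- lo) (- f M')). assert (h2 := Rmin_r (- lo) (- f M')).
  destruct (hg y ltac:(lra)) as [gy ey].
  destruct (Rlt_le_dec M' (g y)) as [|hle]; [lra|].
  destruct (Rle_lt_or_eq_dec _ _ hle) as [hlt|heq].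
  - pose proof (f_incr _ _ gy hlt). lra.
  - rewrite heq in ey. lra.
Qed.

End RightInverse.

Lemma Rpower_gt_0 (x y : R) : 0 < Rpower x y.
Proof. apply exp_pos. Qed.

Lemma Rpower_le_1 (x y : R) : 0 < x <= 1 -> 0 <= y -> Rpower x y <= 1.
Proof.
  intros hx hy. unfold Rpower. rewrite <- exp_0.
  assert (hln : ln x <= 0) by (rewrite <- ln_1; apply ln_le; lra).
  destruct (Rle_lt_or_eq_dec (y * ln x) 0) as [h|e]; [nra| |rewrite e; lra].
  apply Rlt_le, exp_increasing, h.
Qed.

Definition dFsp (gamma mu K U : R) : R :=
  Fsp gamma mu K U * (2 / (gamma + 1) - U) / (U * (U - 2 * mu / (gamma + 1))).

Section Fsp.

Variables gamma mu K : R.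
Hypotheses (hg : -1 < gamma) (hmu0 : 0 < mu) (hmu1 : mu < 1) (hK : 0 < K).

Local Notation F := (Fsp gamma mu K).
(* [Uz] is the zero of [F] and of [ode_rhs]; [Up] is the pole of [ode_rhs]
   and the critical point of [F]. *)
Local Notation Uz := (2 * mu / (gamma + 1)).
Local Notation Up := (2 / (gamma + 1)).

Lemma Uz_gt_0 : 0 < Uz.
Proof. apply Rdiv_lt_0_compat; lra. Qed.

Lemma Uz_lt_Up : Uz < Up.
Proof. apply Rmult_lt_compat_r; [apply Rinv_0_lt_compat|]; lra. Qed.

(* No condition on U: [Rpower x y = exp (y * ln x)] is positive for every x. *)
Lemma Fsp_lt_0 U : F U < 0.
Proof.
  unfold Fsp.
  pose proof (Rpower_gt_0 (U - Uz) (1 / mu - 1)).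
  pose proof (Rpower_gt_0 U (1 / mu)).
  assert (0 < K * Rpower (U - Uz) (1 / mu - 1) / Rpower U (1 / mu))
    by (apply Rdiv_lt_0_compat; nra).
  unfold Rdiv in *. lra.
Qed.

Lemma Fsp_mul_self U : Uz < U -> F U * U = - K * Rpower (1 - Uz / U) (1 / mu - 1).
Proof.
  intros hU. pose proof Uz_gt_0.
  assert (hpow : Rpower U (1 / mu) = Rpower U (1 / mu - 1) * U).
  { rewrite <- (Rpower_1 U) at 3 by lra. rewrite <- Rpower_plus. f_equal. ring. }
  assert (hbase : U - Uz = (1 - Uz / U) * U) by (field; lra).
  assert (Uz / U < 1) by (apply (Rdiv_lt_1 Uz U); lra).
  pose proof (Rpower_gt_0 U (1 / mu - 1)).
  unfold Fsp. rewrite hpow, hbase, <- Rpower_mult_distr by lra.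
  field. lra.
Qed.

Lemma Fsp_ge U : Uz < U -> - K / U <= F U.
Proof.
  intros hU. pose proof Uz_gt_0.
  assert (hmul := Fsp_mul_self U hU).
  assert (Rpower (1 - Uz / U) (1 / mu - 1) <= 1).
  { apply Rpower_le_1.
    - assert (Uz / U < 1) by (apply (Rdiv_lt_1 Uz U); lra).
      assert (0 < Uz / U) by (apply Rdiv_lt_0_compat; lra). lra.
    - assert (1 < / mu) by (rewrite <- Rinv_1; apply Rinv_lt_contravar; lra).
      unfold Rdiv. lra. }
  apply Rmult_le_reg_r with U; [lra|].
  replace (- K / U * U) with (- K) by (field; lra). nra.
Qed.

Lemma is_lim_Fsp_mul_self : is_lim (fun U => F U * U) p_infty (- K).
Proof.
  apply is_lim_ext_loc with (fun U => - K * Rpower (1 - Uz / U) (1 / mu - 1)).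
  { exists Uz. intros U hU. symmetry. apply Fsp_mul_self, hU. }
  assert (hlim : is_lim (fun U => 1 - Uz / U) p_infty (1 - Uz * 0)).
  { apply is_lim_minus'; [apply is_lim_const|].
    apply (is_lim_scal_l (fun U => / U) Uz p_infty 0).
    apply (is_lim_inv (fun U => U) p_infty p_infty); [apply is_lim_id|discriminate]. }
  rewrite Rmult_0_r, Rminus_0_r in hlim.
  assert (hcont : continuous (fun t => - K * Rpower t (1 / mu - 1)) 1).
  { apply (ex_derive_continuous (K := R_AbsRing) (V := R_NormedModule)).
    unfold Rpower. auto_derive. lra. }
  pose proof (is_lim_comp_continuous _ _ _ _ hlim hcont) as h.
  unfold Rpower in h at 2. rewrite ln_1, Rmult_0_r, exp_0, Rmult_1_r in h.
  exact h.
Qed.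

Lemma is_derive_Fsp U : Uz < U -> is_derive F U (dFsp gamma mu K U).
Proof.
  intros hU. pose proof Uz_gt_0.
  pose proof (exp_pos (1 / mu * ln U)).
  unfold dFsp, Fsp, Rpower. auto_derive.
  - repeat split; lra.
  - assert (2 * mu = Uz * (gamma + 1)) by (field; lra).
    unfold Rminus. field. repeat split; nra.
Qed.

Lemma dFsp_gt_0 U : Up < U -> 0 < dFsp gamma mu K U.
Proof.
  intros hU. pose proof Uz_gt_0. pose proof Uz_lt_Up.
  pose proof (Fsp_lt_0 U).
  unfold dFsp. apply Rdiv_lt_0_compat; nra.
Qed.

Lemma Fsp_increasing U V : Up < U -> U < V -> F U < F V.
Proof.
  intros hU hUV. pose proof Uz_lt_Up.
  apply (incr_function F Up p_infty (dFsp gamma mu K)); simpl; auto.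
  - intros W hW _. apply is_derive_Fsp. lra.
  - intros W hW _. apply dFsp_gt_0, hW.
Qed.

Lemma Fsp_inverse U0 y : Up < U0 -> F U0 < y < 0 -> exists! U, U0 < U /\ y = F U.
Proof.
  intros hU0 hy. pose proof Uz_gt_0. pose proof Uz_lt_Up.
  set (M := U0 + 1 + 2 * K / - y).
  assert (0 < 2 * K / - y) by (apply Rdiv_lt_0_compat; lra).
  assert (hyM : y < F M).
  { apply Rlt_le_trans with (- K / M); [|apply Fsp_ge; unfold M; lra].
    apply Rmult_lt_reg_r with M; [unfold M; lra|].
    replace (- K / M * M) with (- K) by (field; unfold M; lra).
    replace (y * M) with (y * (U0 + 1) - 2 * K) by (unfold M; field; lra).
    nra. }
  destruct (IVT_interv (fun U => F U - y) U0 M) as [U [hU eU]].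
  - intros V hV. apply continuity_pt_minus; [|apply continuity_pt_const; now intros ? ?].
    apply derivable_continuous_pt. exists (dFsp gamma mu K V).
    apply is_derive_Reals, is_derive_Fsp. lra.
  - unfold M; lra.
  - lra.
  - lra.
  - assert (U <> U0) by (intros ->; lra).
    exists U. split; [split; lra|].
    intros V [hV eV].
    destruct (Rtotal_order U V) as [hlt|[heq|hlt]]; [|exact heq|].
    + pose proof (Fsp_increasing U V ltac:(lra) hlt). lra.
    + pose proof (Fsp_increasing V U ltac:(lra) hlt). lra.
Qed.

Lemma Fsp_div_dFsp U : Up < U -> F U / dFsp gamma mu K U = ode_rhs gamma mu U.
Proof.
  intros hU. pose proof Uz_gt_0. pose proof Uz_lt_Up.
  pose proof (Fsp_lt_0 U).
  assert (2 * mu = Uz * (gamma + 1)) by (field; lra).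
  assert (2 = Up * (gamma + 1)) by (field; lra).
  unfold dFsp, ode_rhs. field. repeat split; nra.
Qed.

End Fsp.

Lemma Up_lt_U_D gamma : 1 < gamma < 3 -> 2 / (gamma + 1) < U_D gamma.
Proof.
  intros hg. unfold U_D, Rdiv. apply Rmult_lt_compat_l; [lra|].
  apply Rinv_lt_contravar; nra.
Qed.

Theorem lemma3p9 (gamma mu K : R)
  (hg1 : 1 < gamma) (hg3 : gamma < 3) (hm0 : 0 < mu) (hm1 : mu < 1) (hK : 0 < K) :
  y_D gamma mu K < 0 /\
  (* U^sp is well defined: unique U > U_D with y = F(U), for each y_D < y < 0 *)
  (forall y, y_D gamma mu K < y < 0 ->
     exists! U, U_D gamma < U /\ y = Fsp gamma mu K U) /\
  (* properties of the function U^sp so defined *)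
  (forall Usp : R -> R,
     (forall y, y_D gamma mu K < y < 0 ->
        U_D gamma < Usp y /\ y = Fsp gamma mu K (Usp y)) ->
     (forall y, y_D gamma mu K < y < 0 ->
        ex_derive Usp y /\ y * Derive Usp y = ode_rhs gamma mu (Usp y)) /\
     filterlim (fun y => y * Usp y) (at_left 0) (locally (- K)) /\
     (forall y, y_D gamma mu K < y < 0 -> U_D gamma < Usp y)).
Proof.
  assert (hg : -1 < gamma) by lra.
  assert (hUD := Up_lt_U_D gamma ltac:(lra)).
  assert (hUz := Uz_lt_Up gamma mu hg hm1).
  assert (incr : forall U V, U_D gamma < U -> U < V -> Fsp gamma mu K U < Fsp gamma mu K V)
    by (intros; apply Fsp_increasing; lra).
  assert (hyD : y_D gamma mu K < 0) by exact (Fsp_lt_0 gamma mu K hK _).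
  split; [exact hyD|split].
  - intros y hy. apply Fsp_inverse; assumption.
  - intros Usp hUsp. split; [|split].
    + intros y hy.
      assert (hd := is_derive_right_inverse _ _ _ incr _ _ _ y
                      (fun U hU => is_derive_Fsp gamma mu K hg hm0 U ltac:(lra))
                      hUsp hy).
      destruct (hUsp y hy) as [hU ey].
      specialize (hd (Rgt_not_eq _ _ (dFsp_gt_0 gamma mu K hg hm0 hm1 hK (Usp y) ltac:(lra)))).
      split; [eexists; exact hd|].
      rewrite (is_derive_unique _ _ _ hd), ey at 1.
      apply Fsp_div_dFsp; lra.
    + assert (hinf := right_inverse_at_left0 _ _ _ incr
                        (fun U _ => Fsp_lt_0 gamma mu K hK U) _ hyD hUsp).
      apply filterlim_ext_loc with (fun y => Fsp gamma mu K (Usp y) * Usp y).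
      * exists (mkposreal _ (Ropp_0_gt_lt_contravar _ hyD)). intros y hy hy0.
        apply Rabs_def2 in hy. unfold minus, plus, opp in hy; simpl in hy.
        destruct (hUsp y ltac:(lra)) as [_ ey]. rewrite <- ey. reflexivity.
      * apply (filterlim_comp _ _ _ Usp (fun U => Fsp gamma mu K U * U) _
                 (Rbar_locally p_infty)); [exact hinf|].
        exact (is_lim_Fsp_mul_self gamma mu K hg hm0).
    + intros y hy. apply hUsp, hy.
Qed.
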